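(* Let $N$ be a finite or infinite set and let $\mathcal A'\subseteq\mathcal P(N)$ with $\emptyset,N\in\mathcal A'$. Let $v'\colon\mathcal A'\to\mathbb R$ be a coalition function with $v'(\emptyset)=0$. If $v'$ is bounded below (there is $L\in\mathbb R$ with $v'(S)\ge L$ for all $S\in\mathcal A'$), then $\mathrm{ba\text{-}core}(v')\neq\emptyset$ if and only if $v'$ is bounded-balanced.
   Context: $\mathrm{field}(\mathcal A')$ denotes the smallest field of sets over $N$ containing $\mathcal A'$ (a field of sets over $N$ is a collection containing $\emptyset$, closed under complements in $N$ and finite unions). For a field $\mathcal A$, $\mathrm{ba}(\mathcal A)$ is the set of bounded additive set functions $\mu\colon\mathcal A\to\mathbb R$ ($\sup_{S\in\mathcal A}|\mu(S)|<\infty$ and $\mu(S\cup T)=\mu(S)+\mu(T)$ for disjoint $S,T\in\mathcal A$). The core is $\mathrm{ba\text{-}core}(v')=\{\mu\in\mathrm{ba}(\mathrm{field}(\mathcal A')):\mu(N)=v'(N),\ \mu(S)\ge v'(S)\text{ for all }S\in\mathcal A'\setminus\{N\}\}$. For a field $\mathcal A$ and $v\colon\mathcal A\to\mathbb R$ with $v(\emptyset)=0$: a finite collection $\{S_1,\dots,S_r\}\subseteq\mathcal A$ is balanced if there are reals $\lambda_1,\dots,\lambda_r\ge0$ with $\sum_p\lambda_p\chi_{S_p}=\chi_N$ ($\chi_S$ the characteristic function of $S$ on $N$), and $v$ is balanced if $\sum_p\lambda_p v(S_p)\le v(N)$ for every balanced collection in $\mathcal A$ and every such choice of weights. The game $v'$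 is bounded-balanced if there exists a coalition function $v\colon\mathrm{field}(\mathcal A')\to\mathbb R$ with $v(\emptyset)=0$ that is bounded below and balanced and satisfies $v(S)=v'(S)$ for all $S\in\mathcal A'$. *)

From HB Require Import structures.
From mathcomp Require Import all_boot all_order all_algebra.
From mathcomp Require Import boolp classical_sets reals.
Set Implicit Arguments. Unset Strict Implicit. Unset Printing Implicit Defensive.
Import Order.TTheory GRing.Theory Num.Theory.
Local Open Scope classical_set_scope.
Local Open Scope ring_scope.

Definition is_field_of_sets {T : Type} (F : set (set T)) : Prop :=
  F set0 /\ (forall S, F S -> F (~` S)) /\
  (forall S U, F S -> F U -> F (S `|` U)).

Definition field_gen {T : Type} (A : set (set T)) : set (set T) :=
  fun S => forall F, is_field_of_sets F -> A `<=` F -> F S.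

Definition chi {R : realType} {T : Type} (S : set T) (x : T) : R :=
  (x \in S)%:R.

Definition is_ba {R : realType} {T : Type} (F : set (set T))
  (mu : set T -> R) : Prop :=
  (exists M : R, forall S, F S -> `|mu S| <= M) /\
  (forall S U, F S -> F U -> S `&` U = set0 -> mu (S `|` U) = mu S + mu U).

(* ba-core(v') for the game (A', v'); v' is only used on A'. *)
Definition ba_core {R : realType} {T : Type} (A' : set (set T))
  (v' : set T -> R) : set (set T -> R) :=
  fun mu => is_ba (field_gen A') mu /\ mu setT = v' setT /\
    (forall S, A' S -> S <> setT -> v' S <= mu S).

Definition balanced_coll {R : realType} {T : Type} (F : set (set T))
  (r : nat) (S : 'I_r -> set T) (lam : 'I_r -> R) : Prop :=
  (forall p, F (S p)) /\ (forall p q, S p = S q -> p = q) /\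
  (forall p, 0 <= lam p) /\
  (forall x : T, \sum_(p < r) lam p * chi (S p) x = chi setT x).

Definition balanced_fun {R : realType} {T : Type} (F : set (set T))
  (v : set T -> R) : Prop :=
  forall (r : nat) (S : 'I_r -> set T) (lam : 'I_r -> R),
    balanced_coll F S lam -> \sum_(p < r) lam p * v (S p) <= v setT.

Definition bounded_below_on {R : realType} {T : Type} (F : set (set T))
  (v : set T -> R) : Prop :=
  exists L : R, forall S, F S -> L <= v S.

Definition bounded_balanced {R : realType} {T : Type} (A' : set (set T))
  (v' : set T -> R) : Prop :=
  exists v : set T -> R, v set0 = 0 /\ bounded_below_on (field_gen A') v /\
    balanced_fun (field_gen A') v /\ (forall S, A' S -> v S = v' S).

From HB Require Import structures.
From mathcomp Require Import all_boot all_order all_algebra.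
From mathcomp Require Import boolp classical_sets functions reals.
From mathcomp Require Import ring lra.
Set Implicit Arguments. Unset Strict Implicit. Unset Printing Implicit Defensive.
Import Order.TTheory GRing.Theory Num.Theory.
Local Open Scope classical_set_scope.
Local Open Scope ring_scope.

(* If mu is in the ba-core, extending v' by mu off A' gives a balanced function:
   an additive mu turns [sum_p lam_p chi_(S_p) = 1] into [sum_p lam_p mu(S_p) = mu(N)].
   Conversely, let v be balanced on the field. On simple functions
   [g = sum_i l_i chi_(S_i) + t] with [l_i >= 0], the supremum of
   [sum_i l_i v(S_i) + t v(N)] over all such representations of g is finite
   (balancedness, after merging repeated sets and normalising the weights) and
   superlinear. Hahn-Banach gives a linear f above it, and mu(S) = f(chi_S) is
   in the ba-core; it is bounded because mu(S) >= v(S) and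
   mu(S) + mu(N \ S) = v(N), with v bounded below. *)

Section HahnBanach.
Variables (R : realType) (V : lmodType R) (W : set V) (p : V -> R).
Hypothesis W0 : W 0.
Hypothesis W_lin : forall a x y, W x -> W y -> W (a *: x + y).
Hypothesis p_subadd : forall x y, W x -> W y -> p (x + y) <= p x + p y.
Hypothesis p_homo : forall a x, 0 < a -> W x -> p (a *: x) = a * p x.

Lemma W_add x y : W x -> W y -> W (x + y).
Proof. by move=> Wx Wy; have := W_lin 1 Wx Wy; rewrite scale1r. Qed.

Lemma W_scale a x : W x -> W (a *: x).
Proof. by move=> Wx; have := W_lin a Wx W0; rewrite addr0. Qed.

Lemma W_sub x y : W x -> W y -> W (x - y).
Proof. by move=> Wx Wy; rewrite -scaleN1r; apply/W_add/W_scale. Qed.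

Lemma p0 : p 0 = 0.
Proof. by have := p_homo (ltr0n R 2) W0; rewrite scaler0; lra. Qed.

Definition linear_graph (G : set (V * R)) :=
  forall c x a y b, G (x, a) -> G (y, b) -> G (c *: x + y, c * a + b).

Definition functional_graph (G : set (V * R)) :=
  forall x a b, G (x, a) -> G (x, b) -> a = b.

Definition dominated_graph (G : set (V * R)) :=
  [/\ linear_graph G, functional_graph G & forall x a, G (x, a) -> W x /\ a <= p x].

Lemma dominated_graph_bigcup (C : set (set (V * R))) :
  C `<=` dominated_graph -> total_on C subset -> dominated_graph (\bigcup_(G in C) G).
Proof.
move=> Cdom Ctot; split.
- move=> c x a y b [G CG Ga] [H CH Hb].
  have [GH|HG] := Ctot _ _ CG CH.
  + by exists H => //; have [lin _ _] := Cdom _ CH; apply: lin => //; apply: GH.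
  + by exists G => //; have [lin _ _] := Cdom _ CG; apply: lin => //; apply: HG.
- move=> x a b [G CG Ga] [H CH Hb].
  have [GH|HG] := Ctot _ _ CG CH.
  + by have [_ fun_ _] := Cdom _ CH; apply: fun_ Hb; apply: GH.
  + by have [_ fun_ _] := Cdom _ CG; apply: fun_ Ga _; apply: HG.
- by move=> x a [G CG Ga]; have [_ _ dom] := Cdom _ CG; apply: dom.
Qed.

Lemma linear_graph0 G : linear_graph G -> G !=set0 -> G (0, 0).
Proof.
move=> lin [[x a] Ga]; have := lin (-1) _ _ _ _ Ga Ga.
by rewrite scaleN1r mulN1r !addNr.
Qed.

Lemma linear_graphZ G c x a : linear_graph G -> G !=set0 -> G (x, a) ->
  G (c *: x, c * a).
Proof.
move=> lin G_neq0 Ga; have := lin c _ _ _ _ Ga (linear_graph0 lin G_neq0).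
by rewrite !addr0.
Qed.

Definition graph_extend (G : set (V * R)) (g : V) (c : R) : set (V * R) :=
  [set z | exists x a t, G (x, a) /\ z = (x + t *: g, a + t * c)].

Section Extension.
Variables (G : set (V * R)) (g : V).
Hypotheses (Gdom : dominated_graph G) (G_neq0 : G !=set0) (Wg : W g).

Lemma extension_constant : exists c,
  (forall y b, G (y, b) -> b - p (y - g) <= c) /\
  (forall z d, G (z, d) -> c <= p (z + g) - d).
Proof.
have [lin _ dom] := Gdom.
(* p(y + z) <= p(y - g) + p(z + g) separates the two families of bounds *)
have sep y b z d : G (y, b) -> G (z, d) -> b - p (y - g) <= p (z + g) - d.
  move=> Gb Gd; have [[Wy _] [Wz _]] := (dom _ _ Gb, dom _ _ Gd).
  have [_ le_bd] := dom _ _ (lin 1 _ _ _ _ Gb Gd); rewrite scale1r mul1r in le_bd.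
  have : p (y + z) <= p (y - g) + p (z + g).
    have -> : y + z = (y - g) + (z + g) by rewrite addrACA addNr addr0.
    by apply: p_subadd; [apply: W_sub | apply: W_add].
  lra.
pose E := [set r | exists y b, G (y, b) /\ r = b - p (y - g)].
have [[x0 a0] Ga0] := G_neq0.
exists (sup E); split.
- move=> y b Gb; apply: ub_le_sup; last by exists y, b.
  by exists (p (x0 + g) - a0) => _ [y' [b' [Gb' ->]]]; apply: sep Ga0.
- move=> z d Gd; apply: ge_sup; first by exists (a0 - p (x0 - g)), x0, a0.
  by move=> _ [y [b [Gb ->]]]; apply: sep Gd.
Qed.

Lemma graph_extend_linear c : linear_graph (graph_extend G g c).
Proof.
have [lin _ _] := Gdom.
move=> k _ _ _ _ [x [a [t [Ga [-> ->]]]]] [y [b [u [Gb [-> ->]]]]].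
exists (k *: x + y), (k * a + b), (k * t + u); split; first exact: lin.
congr (_, _); last by ring.
by rewrite scalerDl scalerDr scalerA addrACA.
Qed.

Lemma graph_extend_functional c : ~ (exists a, G (g, a)) ->
  functional_graph (graph_extend G g c).
Proof.
have [lin fun_ _] := Gdom.
move=> g_notin _ _ _ [x [a [t [Ga [-> ->]]]]] [y [b [u [Gb [exy ->]]]]].
have [eq_tu|neq_tu] := eqVneq t u.
  rewrite -eq_tu in exy; have {}exy : x = y := addIr _ exy.
  by rewrite eq_tu (fun_ x a b Ga) // exy.
(* two different values of t would put g itself in the domain of G *)
apply: absurd g_notin; exists ((t - u)^-1 * (-1 * a + b)).
have -> : g = (t - u)^-1 *: ((-1) *: x + y).
  have -> : y = x + t *: g - u *: g by rewrite exy addrK.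
  rewrite scaleN1r addrA addKr -scalerBl scalerA mulVf ?scale1r //.
  by rewrite subr_eq0.
exact: linear_graphZ lin G_neq0 (lin (-1) _ _ _ _ Ga Gb).
Qed.

Lemma graph_extend_dominated c :
  (forall y b, G (y, b) -> b - p (y - g) <= c) ->
  (forall z d, G (z, d) -> c <= p (z + g) - d) ->
  forall x a, graph_extend G g c (x, a) -> W x /\ a <= p x.
Proof.
have [lin _ dom] := Gdom.
move=> c_ge c_le _ _ [x [a [t [Ga [-> ->]]]]].
have [Wx le_ax] := dom _ _ Ga.
split; first by rewrite addrC; apply: W_lin.
have [t_lt0|t_gt0|->] := ltgtP t 0; last by rewrite scale0r mul0r !addr0.
- have s_gt0 : 0 < - t by rewrite oppr_gt0.
  have bound := c_ge _ _ (linear_graphZ (- t)^-1 lin G_neq0 Ga).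
  rewrite -(ler_pM2l s_gt0) mulrBr mulrA mulfV ?gt_eqF // mul1r in bound.
  have -> : x + t *: g = - t *: ((- t)^-1 *: x - g).
    by rewrite scalerBr scalerA mulfV ?gt_eqF // scale1r scaleNr opprK.
  rewrite p_homo //; last by apply: W_sub => //; apply: W_scale.
  lra.
- have bound := c_le _ _ (linear_graphZ t^-1 lin G_neq0 Ga).
  rewrite -(ler_pM2l t_gt0) mulrBr mulrA mulfV ?gt_eqF // mul1r in bound.
  have -> : x + t *: g = t *: (t^-1 *: x + g).
    by rewrite scalerDr scalerA mulfV ?gt_eqF // scale1r.
  rewrite p_homo //; last by apply: W_add => //; apply: W_scale.
  lra.
Qed.

End Extension.

Theorem hahn_banach : exists f : V -> R,
  (forall a x y, W x -> W y -> f (a *: x + y) = a * f x + f y) /\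
  (forall x, W x -> f x <= p x).
Proof.
have [G [Gdom Gmax]] := Zorn_bigcup dominated_graph_bigcup.
have [lin fun_ dom] := Gdom.
have G_neq0 : G !=set0.
  apply: contrapT => G_empty; apply: (Gmax [set (0, 0)]).
    split=> [z Gz|sub]; first by exfalso; apply: G_empty; exists z.
    by apply: G_empty; exists (0, 0); apply: sub.
  split.
  - by move=> c x a y b [-> ->] [-> ->]; rewrite scaler0 mulr0 !addr0.
  - by move=> x a b [_ ->] [_ ->].
  - by move=> x a [-> ->]; rewrite p0.
have G_total g : W g -> exists a, G (g, a).
  move=> Wg; apply: contrapT => g_notin.
  have [c [c_ge c_le]] := extension_constant Gdom G_neq0 Wg.
  apply: (Gmax (graph_extend G g c)).
    split; first by move=> [x a] Ga; exists x, a, 0; rewrite scale0r mul0r !addr0.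
    move=> sub; apply: g_notin; exists c; apply: sub.
    exists 0, 0, 1; split; first exact: linear_graph0.
    by rewrite scale1r mul1r !add0r.
  split; [exact: graph_extend_linear | exact: graph_extend_functional |].
  exact: graph_extend_dominated.
pose f x := xget 0 [set a | G (x, a)].
have Gf x : W x -> G (x, f x) by move=> Wx; exact: (xgetPex 0 (G_total _ Wx)).
exists f; split; last by move=> x Wx; have [] := dom _ _ (Gf _ Wx).
move=> a x y Wx Wy; apply: (fun_ (a *: x + y)); first exact/Gf/W_lin.
exact: lin a _ _ _ _ (Gf _ Wx) (Gf _ Wy).
Qed.

End HahnBanach.

Section FieldGen.
Variables (T : Type) (A : set (set T)).
Local Notation F := (field_gen A).

Lemma field_gen_field : is_field_of_sets F.
Proof.
split; first by move=> G [].
split=> [S FS G Gfield AG|S U FS FU G Gfield AG]; have [_ [GC GU]] := Gfield.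
  exact: GC (FS _ Gfield AG).
exact: GU (FS _ Gfield AG) (FU _ Gfield AG).
Qed.

Lemma sub_field_gen : A `<=` F.
Proof. by move=> S AS G _; apply. Qed.

Lemma field_gen0 : F set0.
Proof. by have [] := field_gen_field. Qed.

Lemma field_genC S : F S -> F (~` S).
Proof. by have [_ []] := field_gen_field; auto. Qed.

Lemma field_genU S U : F S -> F U -> F (S `|` U).
Proof. by have [_ []] := field_gen_field; auto. Qed.

Lemma field_genI S U : F S -> F U -> F (S `&` U).
Proof.
move=> FS FU; rewrite -[_ `&` _]setCK setCI.
by apply: field_genC; apply: field_genU; apply: field_genC.
Qed.

Lemma field_genT : F setT.
Proof. by rewrite -setC0; apply: field_genC; apply: field_gen0. Qed.

End FieldGen.

Section Chi.
Variables (R : realType) (T : Type).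
Implicit Types (S U : set T) (x : T).

Lemma chi_in S x : S x -> chi S x = 1 :> R.
Proof. by move=> Sx; rewrite /chi mem_set. Qed.

Lemma chi_notin S x : ~ S x -> chi S x = 0 :> R.
Proof. by move=> Sx; rewrite /chi memNset. Qed.

Lemma chiT x : chi setT x = 1 :> R.
Proof. exact: chi_in. Qed.

Lemma chi_ge0 S x : 0 <= chi S x :> R.
Proof. by rewrite /chi ler0n. Qed.

Lemma chiC S x : chi (~` S) x = 1 - chi S x :> R.
Proof.
have [Sx|Sx] := pselect (S x).
  by rewrite (chi_in Sx) (@chi_notin (~` S)) ?subrr.
by rewrite (chi_notin Sx) (@chi_in (~` S)) ?subr0.
Qed.

Lemma chiU S U x : S `&` U = set0 -> chi (S `|` U) x = chi S x + chi U x :> R.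
Proof.
move=> SU0; have [Sx|Sx] := pselect (S x).
  have Ux : ~ U x by move=> Ux; have : (S `&` U) x by []; rewrite SU0.
  by rewrite (chi_in Sx) (chi_notin Ux) (@chi_in (S `|` U)) ?addr0 //; left.
have [Ux|Ux] := pselect (U x).
  by rewrite (chi_notin Sx) (chi_in Ux) (@chi_in (S `|` U)) ?add0r //; right.
by rewrite (chi_notin Sx) (chi_notin Ux) (@chi_notin (S `|` U)) ?addr0 // => -[].
Qed.

End Chi.

Section Additive.
Variables (R : realType) (T : Type) (A : set (set T)) (mu : set T -> R).
Local Notation F := (field_gen A).
Hypothesis mu_add :
  forall S U, F S -> F U -> S `&` U = set0 -> mu (S `|` U) = mu S + mu U.

Lemma additive_set0 : mu set0 = 0.
Proof.
have := mu_add (@field_gen0 _ A) (@field_gen0 _ A) (setI0 set0).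
by rewrite setU0; lra.
Qed.

Lemma additive_sum_chi_const (I : Type) (s : seq I) (S : I -> set T) (lam : I -> R) :
  (forall i, F (S i)) -> forall B c, F B ->
  (forall x, B x -> \sum_(i <- s) lam i * chi (S i) x = c) ->
  \sum_(i <- s) lam i * mu (S i `&` B) = c * mu B.
Proof.
move=> FS; elim: s => [|i s IH] B c FB sumB.
  rewrite big_nil; have [->|/set0P [x Bx]] := eqVneq B set0.
    by rewrite additive_set0 mulr0.
  by rewrite -(sumB x Bx) big_nil mul0r.
(* split B along S i: on B `&` S i the remaining sum is c - lam i, on B `\` S i it is c *)
pose B1 := B `&` S i; pose B2 := B `&` ~` S i.
have FB1 : F B1 by apply: field_genI.
have FB2 : F B2 by apply: field_genI => //; apply: field_genC.
have mu_split U : F U -> mu (U `&` B) = mu (U `&` B1) + mu (U `&` B2).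
  move=> FU; rewrite -mu_add; [|exact: field_genI|exact: field_genI|].
    by rewrite -setIUr -setIUr setUv setIT.
  by rewrite -subset0 => x [[_ [_ ?]] [_ [_ ?]]].
rewrite big_cons (mu_split _ (FS i)) mulrDr.
under eq_bigr => j _ do rewrite (mu_split _ (FS j)) mulrDr.
rewrite big_split /= (IH B1 (c - lam i)) // => [|x [Bx Six]]; last first.
  by rewrite -(sumB x Bx) big_cons chi_in // mulr1 addrAC subrr add0r.
rewrite (IH B2 c) // => [|x [Bx Six]]; last first.
  by rewrite -(sumB x Bx) big_cons chi_notin // mulr0 add0r.
have -> : S i `&` B1 = B1 by rewrite setIC -setIA setIid.
have -> : S i `&` B2 = set0 by rewrite setICA setICr setI0.
have := mu_split _ (@field_genT _ A); rewrite !setTI => ->.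
rewrite additive_set0; ring.
Qed.

Lemma additive_sum_balanced r (S : 'I_r -> set T) (lam : 'I_r -> R) :
  balanced_coll F S lam -> \sum_(p < r) lam p * mu (S p) = mu setT.
Proof.
move=> [FS [_ [_ sum1]]].
rewrite -[RHS]mul1r -(@additive_sum_chi_const _ (index_enum _) S lam FS setT 1
  (@field_genT _ A)) => [|x _].
  by apply: eq_bigr => p _; rewrite setIT.
by rewrite sum1 chiT.
Qed.

End Additive.

Lemma bounded_balanced_of_ba_core (R : realType) (T : Type) (A : set (set T))
    (v' : set T -> R) :
  A set0 -> A setT -> v' set0 = 0 -> bounded_below_on A v' ->
  ba_core A v' !=set0 -> bounded_balanced A v'.
Proof.
move=> A0 AT v'0 [L v'_ge] [mu [[[M mu_le] mu_add] [muT v'_le]]].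
pose v S := if `[< A S >] then v' S else mu S.
have vA S : A S -> v S = v' S by move=> AS; rewrite /v asboolT.
have v_le_mu S : field_gen A S -> v S <= mu S.
  rewrite /v; case: asboolP => // AS _.
  by have [->|SnT] := pselect (S = setT); [rewrite muT | apply: v'_le].
exists v; split; first by rewrite vA.
split.
  exists (Num.min L (- M)) => S FS; rewrite /v ge_min; case: asboolP => AS.
    by rewrite v'_ge.
  by have := mu_le S FS; rewrite ler_norml => /andP [-> _]; rewrite orbT.
split=> [r S lam Sbal|]; last exact: vA.
rewrite vA // -muT -(additive_sum_balanced mu_add Sbal).
have [FS [_ [lam_ge0 _]]] := Sbal.
by apply: ler_sum => p _; apply: ler_wpM2l; [exact: lam_ge0 | exact: v_le_mu].
Qed.

Section WeightedSum.
Variables (R : numDomainType) (K : eqType).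
Implicit Types (l : seq (K * R)) (h : K -> R).

Definition wsum l h := \sum_(z <- l) z.2 * h z.1.

Definition nonneg_weights (P : set K) l := forall z, z \in l -> P z.1 /\ 0 <= z.2.

Definition scale_weights a l := [seq (z.1, a * z.2) | z <- l].

Definition merge_weights l :=
  [seq (k, \sum_(z <- l | z.1 == k) z.2) | k <- undup (map fst l)].

Lemma wsum_cat l1 l2 h : wsum (l1 ++ l2) h = wsum l1 h + wsum l2 h.
Proof. exact: big_cat. Qed.

Lemma wsum_scale a l h : wsum (scale_weights a l) h = a * wsum l h.
Proof. by rewrite /wsum big_map mulr_sumr; apply: eq_bigr => z _; rewrite mulrA. Qed.

Lemma wsum_merge l h : wsum (merge_weights l) h = wsum l h.
Proof.
rewrite /wsum big_map /=.
under eq_bigr => k _ do rewrite mulr_suml big_mkcond.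
rewrite exchange_big /=; apply: eq_big_seq => z zl.
rewrite (bigD1_seq z.1) ?undup_uniq ?mem_undup ?map_f //= eqxx big1 ?addr0 //.
by move=> k /negbTE; rewrite eq_sym => ->.
Qed.

Lemma merge_weights_uniq l : uniq (map fst (merge_weights l)).
Proof. by rewrite -map_comp map_id undup_uniq. Qed.

Lemma map_fst_scale a l : map fst (scale_weights a l) = map fst l.
Proof. by rewrite -map_comp. Qed.

Lemma nonneg_weights_cat P l1 l2 :
  nonneg_weights P l1 -> nonneg_weights P l2 -> nonneg_weights P (l1 ++ l2).
Proof. by move=> l1P l2P z; rewrite mem_cat => /orP [/l1P|/l2P]. Qed.

Lemma nonneg_weights_scale P a l :
  0 <= a -> nonneg_weights P l -> nonneg_weights P (scale_weights a l).
Proof.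
move=> a_ge0 lP _ /mapP [z zl ->]; have [Pz z_ge0] := lP _ zl.
by split=> //; apply: mulr_ge0.
Qed.

Lemma nonneg_weights_merge P l : nonneg_weights P l -> nonneg_weights P (merge_weights l).
Proof.
move=> lP _ /mapP [k + ->] /=; rewrite mem_undup => /mapP [z zl ->].
split; first by have [] := lP _ zl.
by rewrite big_seq_cond; apply: sumr_ge0 => w /andP [/lP []].
Qed.

End WeightedSum.

Section SimpleFunctions.
Variables (R : realType) (T : Type) (A : set (set T)).
Local Notation F := (field_gen A).
Implicit Types (l : seq (set T * R)) (t : R).

Definition simple_fun l t : T -> R^o := fun x => wsum l (fun S => chi S x) + t.

Definition is_simple (g : T -> R^o) :=
  exists l t, nonneg_weights F l /\ simple_fun l t = g.

Definition compl_weights l := [seq (~` z.1, z.2) | z <- l].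

Lemma nonneg_weights_compl l : nonneg_weights F l -> nonneg_weights F (compl_weights l).
Proof.
move=> lF _ /mapP [z zl ->]; have [Fz z_ge0] := lF _ zl.
by split=> //; apply: field_genC.
Qed.

Lemma simple_fun_cat l1 t1 l2 t2 x :
  simple_fun (l1 ++ l2) (t1 + t2) x = simple_fun l1 t1 x + simple_fun l2 t2 x.
Proof. by rewrite /simple_fun wsum_cat addrACA. Qed.

Lemma simple_fun_scale a l t x :
  simple_fun (scale_weights a l) (a * t) x = a * simple_fun l t x.
Proof. by rewrite /simple_fun wsum_scale mulrDr. Qed.

(* [- a chi_S = a chi_(~` S) - a] turns negative weights into nonnegative ones *)
Lemma simple_fun_compl l t x :
  simple_fun (compl_weights l) (- (\sum_(z <- l) z.2 + t)) x = - simple_fun l t x.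
Proof.
rewrite /simple_fun /wsum big_map /=.
under eq_bigr => z _ do rewrite chiC mulrBr mulr1.
by rewrite sumrB; ring.
Qed.

Lemma is_simple0 : is_simple 0.
Proof.
exists [::], 0; split=> //.
by apply/funext => x; rewrite /simple_fun /wsum big_nil addr0.
Qed.

Lemma is_simple_chi S : F S -> is_simple (chi S).
Proof.
move=> FS; exists [:: (S, 1)], 0; split; first by move=> z; rewrite inE => /eqP ->.
by apply/funext => x; rewrite /simple_fun /wsum big_seq1 mul1r addr0.
Qed.

Lemma is_simple_lin a g h : is_simple g -> is_simple h -> is_simple (a *: g + h).
Proof.
move=> [l1 [t1 [l1F <-]]] [l2 [t2 [l2F <-]]].
have [a_ge0|a_lt0] := leP 0 a.
  exists (scale_weights a l1 ++ l2), (a * t1 + t2); split.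
    exact/nonneg_weights_cat/l2F/nonneg_weights_scale.
  by apply/funext => x; rewrite simple_fun_cat simple_fun_scale.
exists (scale_weights (- a) (compl_weights l1) ++ l2),
  (- a * - (\sum_(z <- l1) z.2 + t1) + t2); split.
  apply/nonneg_weights_cat/l2F/nonneg_weights_scale/nonneg_weights_compl => //.
  by rewrite oppr_ge0 ltW.
apply/funext => x; rewrite simple_fun_cat simple_fun_scale simple_fun_compl.
by rewrite mulrNN.
Qed.

End SimpleFunctions.

Section BalancedFun.
Variables (R : realType) (T : Type) (A : set (set T)) (v : set T -> R).
Local Notation F := (field_gen A).
Hypotheses (v0 : v set0 = 0) (v_bal : balanced_fun F v).
Implicit Types (l : seq (set T * R)) (t : R).

Lemma balanced_wsum1 l : nonneg_weights F l -> uniq (map fst l) ->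
  (forall x, wsum l (fun S => chi S x) = 1) -> wsum l v <= v setT.
Proof.
move=> lF l_uniq sum1; pose z0 := (set0 : set T, 0 : R).
have wsum_nth h : wsum l h = \sum_(p < size l) (nth z0 l p).2 * h (nth z0 l p).1.
  by rewrite /wsum (big_nth z0) big_mkord.
rewrite wsum_nth; apply: v_bal; split.
  by move=> p; have [] := lF _ (mem_nth z0 (ltn_ord p)).
split.
  move=> p q e; apply/val_inj/eqP.
  rewrite -(nth_uniq set0 _ _ l_uniq) ?size_map ?ltn_ord // !(nth_map z0) ?ltn_ord //.
  by rewrite e.
split; first by move=> p; have [] := lF _ (mem_nth z0 (ltn_ord p)).
by move=> x; rewrite chiT -(sum1 x) wsum_nth.
Qed.

Lemma balanced_wsum l s : nonneg_weights F l ->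
  (forall x, wsum l (fun S => chi S x) = s) -> wsum l v <= s * v setT.
Proof.
move=> lF sum_s; have [[y _]|T0] := pselect (exists y : T, True); last first.
  have setT0 : [set: T] = set0 by apply/seteqP; split=> // y _; apply: T0; exists y.
  rewrite setT0 v0 mulr0 /wsum big1_seq // => z _.
  suff -> : z.1 = set0 by rewrite v0 mulr0.
  by rewrite -subset0 -setT0.
have s_ge0 : 0 <= s.
  rewrite -(sum_s y) /wsum big_seq; apply: sumr_ge0 => z /lF [_ z_ge0].
  exact/mulr_ge0/chi_ge0.
(* adding [N] with weight 1 makes the total weight [s + 1] positive; then normalise *)
pose m := scale_weights (s + 1)^-1 (merge_weights (l ++ [:: (setT, 1)])).
have s1_gt0 : 0 < s + 1 by lra.
have wsum_m h : wsum m h = (s + 1)^-1 * (wsum l h + h setT).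
  by rewrite wsum_scale wsum_merge wsum_cat /wsum big_seq1 mul1r.
have := @balanced_wsum1 m.
rewrite wsum_m map_fst_scale -(ler_pM2l s1_gt0) mulVKf ?gt_eqF //.
have -> : (s + 1) * v setT = s * v setT + v setT by ring.
rewrite lerD2r; apply.
- apply/nonneg_weights_scale/nonneg_weights_merge/nonneg_weights_cat => //.
    by rewrite invr_ge0 ltW.
  by move=> z; rewrite inE => /eqP -> /=; split=> //; apply: field_genT.
- exact: merge_weights_uniq.
- by move=> x; rewrite wsum_m sum_s chiT mulVf ?gt_eqF.
Qed.

End BalancedFun.

Section BalancedSup.
Variables (R : realType) (T : Type) (A : set (set T)) (v : set T -> R).
Local Notation F := (field_gen A).
Hypotheses (v0 : v set0 = 0) (v_bal : balanced_fun F v).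
Implicit Types (l : seq (set T * R)) (t : R) (g h : T -> R^o).

Definition simple_value l t := wsum l v + t * v setT.

Definition simple_values g := [set r | exists l t,
  [/\ nonneg_weights F l, simple_fun l t = g & r = simple_value l t]].

Definition balanced_sup g := sup (simple_values g).

Lemma simple_value_opp l t l' t' : nonneg_weights F l -> nonneg_weights F l' ->
  (forall x, simple_fun l t x = - simple_fun l' t' x) ->
  simple_value l t <= - simple_value l' t'.
Proof.
move=> lF l'F opp.
have sum_cat x : wsum (l ++ l') (fun S => chi S x) = - (t + t').
  by have := opp x; rewrite wsum_cat /simple_fun; lra.
have := balanced_wsum v0 v_bal (nonneg_weights_cat lF l'F) sum_cat.
by rewrite wsum_cat /simple_value; lra.
Qed.

Lemma simple_values_ubound g : is_simple A g -> has_ubound (simple_values g).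
Proof.
move=> [l [t [lF <-]]].
exists (- simple_value (compl_weights l) (- (\sum_(z <- l) z.2 + t))).
move=> _ [l' [t' [l'F e ->]]]; apply: simple_value_opp => //.
  exact: nonneg_weights_compl.
by move=> x; rewrite simple_fun_compl opprK e.
Qed.

Lemma le_balanced_sup g r : is_simple A g -> simple_values g r -> r <= balanced_sup g.
Proof. by move=> /simple_values_ubound/ub_le_sup; apply. Qed.

Lemma balanced_sup_le g b : is_simple A g ->
  (forall r, simple_values g r -> r <= b) -> balanced_sup g <= b.
Proof.
move=> [l [t [lF e]]]; apply: ge_sup.
by exists (simple_value l t), l, t.
Qed.

Lemma balanced_sup_superadd g h : is_simple A g -> is_simple A h ->
  balanced_sup g + balanced_sup h <= balanced_sup (g + h).
Proof.
move=> Sg Sh; have Sgh : is_simple A (g + h) by rewrite -[g]scale1r; apply: is_simple_lin.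
have sum_le r r' : simple_values g r -> simple_values h r' ->
    r + r' <= balanced_sup (g + h).
  move=> [l [t [lF eg ->]]] [l' [t' [l'F eh ->]]].
  apply: le_balanced_sup => //; exists (l ++ l'), (t + t'); split.
  - exact: nonneg_weights_cat.
  - by apply/funext => x; rewrite simple_fun_cat -eg -eh.
  - by rewrite /simple_value wsum_cat; ring.
suff : balanced_sup g <= balanced_sup (g + h) - balanced_sup h by lra.
apply: balanced_sup_le => // r gr.
suff : balanced_sup h <= balanced_sup (g + h) - r by lra.
by apply: balanced_sup_le => // r' hr'; have := sum_le _ _ gr hr'; lra.
Qed.

Lemma balanced_sup_homo_ge a g : 0 < a -> is_simple A g ->
  a * balanced_sup g <= balanced_sup (a *: g).
Proof.
move=> a_gt0 Sg; have Sag : is_simple A (a *: g).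
  by rewrite -[_ *: _]addr0; apply/is_simple_lin/is_simple0.
suff : balanced_sup g <= a^-1 * balanced_sup (a *: g).
  by move/(ler_wpM2l (ltW a_gt0)); rewrite mulVKf ?gt_eqF.
apply: balanced_sup_le => // _ [l [t [lF eg ->]]].
rewrite -(ler_pM2l a_gt0) mulVKf ?gt_eqF //.
apply: le_balanced_sup => //; exists (scale_weights a l), (a * t); split.
- exact/nonneg_weights_scale/lF/ltW.
- by apply/funext => x; rewrite simple_fun_scale -eg.
- by rewrite /simple_value wsum_scale; ring.
Qed.

Lemma balanced_sup_homo a g : 0 < a -> is_simple A g ->
  balanced_sup (a *: g) = a * balanced_sup g.
Proof.
move=> a_gt0 Sg; apply/le_anti/andP; split; last exact: balanced_sup_homo_ge.
have Sag : is_simple A (a *: g).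
  by rewrite -[_ *: _]addr0; apply/is_simple_lin/is_simple0.
have := @balanced_sup_homo_ge a^-1 _ ltac:(by rewrite invr_gt0) Sag.
rewrite scalerA mulVf ?gt_eqF // scale1r.
by move/(ler_wpM2l (ltW a_gt0)); rewrite mulVKf ?gt_eqF.
Qed.

Lemma balanced_sup_chi S : F S -> v S <= balanced_sup (chi S).
Proof.
move=> FS; apply: le_balanced_sup; first exact: is_simple_chi.
exists [:: (S, 1)], 0; split; first by move=> z; rewrite inE => /eqP ->.
  by apply/funext => x; rewrite /simple_fun /wsum big_seq1 mul1r addr0.
by rewrite /simple_value /wsum big_seq1 mul1r mul0r addr0.
Qed.

Lemma balanced_sup_opp_chiT : - v setT <= balanced_sup (- chi setT : T -> R^o).
Proof.
have e : simple_fun [::] (-1) = - chi setT :> (T -> R^o).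
  apply/funext => x.
  by rewrite /simple_fun /wsum big_nil add0r -[RHS]/(- chi setT x) chiT.
apply: le_balanced_sup; first by rewrite -e; exists [::], (-1).
by exists [::], (-1); split=> //; rewrite /simple_value /wsum big_nil add0r mulN1r.
Qed.

End BalancedSup.

Section CoreOfFunctional.
Variables (R : realType) (T : Type) (A : set (set T)) (v : set T -> R).
Variables (L : R) (f : (T -> R^o) -> R).
Local Notation F := (field_gen A).
Hypotheses (v0 : v set0 = 0) (v_bal : balanced_fun F v).
Hypothesis v_ge : forall S, F S -> L <= v S.
Hypothesis f_lin : forall a g h, is_simple A g -> is_simple A h ->
  f (a *: g + h) = a * f g + f h.
Hypothesis f_ge : forall g, is_simple A g -> balanced_sup A v g <= f g.

Lemma le_f_chi S : F S -> v S <= f (chi S).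
Proof.
move=> FS; apply: le_trans (balanced_sup_chi v0 v_bal FS) _.
exact/f_ge/is_simple_chi.
Qed.

Lemma f_chiT : f (chi setT) = v setT.
Proof.
have FT := @field_genT _ A.
have f0 : f 0 = 0.
  by have := f_lin 1 (is_simple0 R A) (is_simple0 R A); rewrite scaler0 addr0 mul1r; lra.
have f_opp : f (- chi setT) = - f (chi setT).
  have := f_lin (-1) (is_simple_chi R FT) (is_simple0 R A).
  by rewrite scaleN1r f0 !addr0 mulN1r.
apply/le_anti/andP; split; last exact: le_f_chi.
have simple_opp : is_simple A (- chi setT : T -> R^o).
  have := is_simple_lin (-1) (is_simple_chi R FT) (is_simple0 R A).
  by rewrite scaleN1r addr0.
have := f_ge simple_opp; have := balanced_sup_opp_chiT v0 v_bal; rewrite f_opp.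
lra.
Qed.

Lemma f_chi_additive S U : F S -> F U -> S `&` U = set0 ->
  f (chi (S `|` U)) = f (chi S) + f (chi U).
Proof.
move=> FS FU SU0.
have -> : chi (S `|` U) = chi S + chi U :> (T -> R^o) by apply/funext => x; apply: chiU.
by have := f_lin 1 (is_simple_chi R FS) (is_simple_chi R FU); rewrite scale1r mul1r.
Qed.

(* [f (chi S) >= v S >= L] and [f (chi S) = v N - f (chi (~` S)) <= v N - L] *)
Lemma f_chi_bounded : exists M, forall S, F S -> `|f (chi S)| <= M.
Proof.
exists (`|L| + `|v setT - L|) => S FS.
have FCS : F (~` S) by apply: field_genC.
have := f_chi_additive FS FCS (setICr S); rewrite setUv f_chiT => compl.
have := le_f_chi FS; have := le_f_chi FCS; have := v_ge FS; have := v_ge FCS.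
have := ler_norm (- L); have := ler_norm (v setT - L); rewrite normrN ler_norml.
have := normr_ge0 L; have := normr_ge0 (v setT - L).
by move=> *; apply/andP; split; lra.
Qed.

End CoreOfFunctional.

Lemma ba_core_of_balanced (R : realType) (T : Type) (A : set (set T)) (v : set T -> R) :
  v set0 = 0 -> bounded_below_on (field_gen A) v -> balanced_fun (field_gen A) v ->
  exists mu, [/\ is_ba (field_gen A) mu, mu setT = v setT &
    forall S, field_gen A S -> v S <= mu S].
Proof.
move=> v0 [L v_ge] v_bal.
have [||f [f_lin f_le]] := @hahn_banach R (T -> R^o) (is_simple A)
  (fun g => - balanced_sup A v g) (is_simple0 R A) (@is_simple_lin R T A).
- by move=> g h Sg Sh; have := balanced_sup_superadd v0 v_bal Sg Sh; lra.
- by move=> a g a_gt0 Sg; rewrite balanced_sup_homo // mulrN.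
have nf_lin a g h : is_simple A g -> is_simple A h ->
    - f (a *: g + h) = a * - f g + - f h.
  by move=> Sg Sh; rewrite f_lin //; ring.
have nf_ge g : is_simple A g -> balanced_sup A v g <= - f g.
  by move=> Sg; rewrite lerNr; apply: f_le.
exists (fun S => - f (chi S)); split.
- split; first exact: (f_chi_bounded v0 v_bal v_ge nf_lin nf_ge).
  exact: (f_chi_additive nf_lin).
- exact: (f_chiT v0 v_bal nf_lin nf_ge).
- exact: (le_f_chi v0 v_bal nf_ge).
Qed.

Theorem theorem8 (R : realType) (T : Type) (A' : set (set T))
  (v' : set T -> R) :
  A' set0 -> A' setT -> v' set0 = 0 ->
  bounded_below_on A' v' ->
  (ba_core A' v' !=set0 <-> bounded_balanced A' v').
Proof.
move=> A0 AT v'0 v'_bdd; split; first exact: bounded_balanced_of_ba_core.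
move=> [v [v0 [v_bdd [v_bal vA]]]].
have [mu [mu_ba muT v_le]] := ba_core_of_balanced v0 v_bdd v_bal.
exists mu; split=> //; split; first by rewrite muT vA.
by move=> S AS _; rewrite -vA //; apply: v_le; apply: sub_field_gen.
Qed.
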